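(* All the symmetries $\chi_{2k+1}$, $k = 0, 1, \dots$, are local.
   Context: Consider the Calogero--Bogoyavlenskii--Schiff breaking soliton equation $u_{tx} = 2u_y u_{xx} + 4u_x u_{xy} - u_{xxxy}$. For $\mu=0$, the recursion operator $\Psi = \mathcal{R}_0(\Phi)$ for symmetries of this equation is defined by the system $\Psi_x = 4u_x\Phi_x + 2u_{xx}\Phi - \Phi_{xxx}$, $\Psi_y = \Phi_t - 2u_y\Phi_x + 2u_{xy}\Phi$ (so a priori its action may produce nonlocal objects). Define $\chi_1 := u_x$ and the symmetries $\chi_{2k+3}$ by the iterated action $\mathcal{R}_0(\chi_{2k+1}) = -\chi_{2k+3}$, $k\ge 0$; e.g. $\chi_3 = u_{xxx} - 3u_x^2$, $\chi_5 = u_{5x} - 5(2u_x(u_{xxx}-u_x^2) + u_{xx}^2)$. Since the equation is Lagrangian (with Lagrangian density $\frac12(m u_x^2u_y - u_xu_t + s u_{xx}u_{xy})$ in the appropriate parameter case), its symmetries are simultaneously cosymmetries, and there is an algorithm (Bogoyavlenskii) generating conservation laws associated to the cosymmetries $\chi_{2k+1}$. ''Local'' means depending only on $t,x,y,u$ and finitely many derivatives of $u$, with no nonlocal variables. *)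

From mathcomp Require Import all_boot all_order all_algebra.
Set Implicit Arguments. Unset Strict Implicit. Unset Printing Implicit Defensive.
Import GRing.Theory.
Local Open Scope ring_scope.

(* Syntax of differential polynomials.
   [U a b c] is the jet coordinate  d_x^a d_y^b d_t^c u. *)
Inductive dpoly : Type :=
| U   : nat -> nat -> nat -> dpoly
| Cst : rat -> dpoly
| Add : dpoly -> dpoly -> dpoly
| Mul : dpoly -> dpoly -> dpoly
| Neg : dpoly -> dpoly.

Fixpoint eval (s : nat -> nat -> nat -> rat) (p : dpoly) : rat :=
  match p with
  | U a b c => s a b c
  | Cst q => q
  | Add p q => eval s p + eval s q
  | Mul p q => eval s p * eval s q
  | Neg p => - eval s p
  end.

Fixpoint Dtot (sh : nat -> nat -> nat -> dpoly) (p : dpoly) : dpoly :=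
  match p with
  | U a b c => sh a b c
  | Cst _ => Cst 0
  | Add p q => Add (Dtot sh p) (Dtot sh q)
  | Mul p q => Add (Mul (Dtot sh p) q) (Mul p (Dtot sh q))
  | Neg p => Neg (Dtot sh p)
  end.

Definition Dx := Dtot (fun a b c => U a.+1 b c).
Definition Dy := Dtot (fun a b c => U a b.+1 c).
Definition Dt := Dtot (fun a b c => U a b c.+1).

Definition Dmulti (a b c : nat) (p : dpoly) : dpoly :=
  iter a Dx (iter b Dy (iter c Dt p)).

Definition Sub p q := Add p (Neg q).
Definition rc (n : nat) : dpoly := Cst n%:R.

Definition CBS : dpoly :=
  Add (Sub (Sub (U 1 0 1) (Mul (rc 2) (Mul (U 0 1 0) (U 2 0 0))))
           (Mul (rc 4) (Mul (U 1 0 0) (U 1 1 0))))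
      (U 3 1 0).

(* p lies in the differential ideal generated by CBS:
   p = sum_i c_i * D_x^{a_i} D_y^{b_i} D_t^{c_i} CBS  as polynomials
   (polynomial identity over the infinite field Q = identity of values at all jet points). *)
Definition in_CBS_ideal (p : dpoly) : Prop :=
  exists r : seq (nat * nat * nat * dpoly),
    forall s, eval s p =
      \sum_(z <- r) eval s z.2 * eval s (Dmulti z.1.1.1 z.1.1.2 z.1.2 CBS).

(* Equality on (the infinite prolongation of) the equation. *)
Definition eq_on_CBS (p q : dpoly) : Prop := in_CBS_ideal (Sub p q).

Definition is_R0_image (Phi Psi : dpoly) : Prop :=
  eq_on_CBS (Dx Psi)
    (Sub (Add (Mul (rc 4) (Mul (U 1 0 0) (Dx Phi)))
              (Mul (rc 2) (Mul (U 2 0 0) Phi)))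
         (Dx (Dx (Dx Phi))))
  /\
  eq_on_CBS (Dy Psi)
    (Add (Sub (Dt Phi) (Mul (rc 2) (Mul (U 0 1 0) (Dx Phi))))
         (Mul (rc 2) (Mul (U 1 1 0) Phi))).

(* Write v = u_x. The Gelfand-Dickey polynomials R_n, given by R_0 = 1 and
     8 R_(k+1) = sum_(i <= k) (2 R_i R_(k-i)'' - R_i' R_(k-i)' - 4 v R_i R_(k-i))
                 - 4 sum_(i < k) R_(i+1) R_(k-i)          (' = d/dx),
   are differential polynomials in v, and their series rho = sum_n R_n z^n solves
   z (2 rho rho'' - rho'^2 - 4 v rho^2) = 4 (rho^2 - 1). Applying to this identity
   a derivation delta that commutes with d/dx gives B(delta rho) = 4 z (delta v) rho^2,
   where B is the linearization of the left-hand side at rho; since rho(0) = 1,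
   B is triangular, so delta rho is determined by delta v. For delta = d/dx this
   is Lenard's recursion R_n''' - 4 v R_n' - 2 v' R_n = 4 R_(n+1)', which is the
   x-part of R_0(chi_(2k+1)) = -chi_(2k+3) for chi_(2k+1) = -2 4^k R_(k+1).
   Comparing delta = D_y with delta = D_t on the equation, where
   u_tx = 2 u_y v' + 4 v u_xy - u_xxxy, the same triangularity shows that
   4 D_y R_(n+1) + D_t R_n - 2 u_y R_n' + 2 u_xy R_n vanishes on solutions,
   which is the y-part. Finally chi_1 = -2 R_1 = u_x. *)

From Pilot Require Import Defs.
From mathcomp Require Import all_boot all_order all_algebra.
From mathcomp Require Import ring lra.
Set Implicit Arguments. Unset Strict Implicit. Unset Printing Implicit Defensive.
Import GRing.Theory Num.Theory.
Local Open Scope ring_scope.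
Local Notation Sub := Defs.Sub.

Section Convolution.
Variable K : comPzRingType.
Implicit Types f g x y z t : nat -> K.

Definition conv f g k := \sum_(i < k.+1) f i * g (k - i)%N.
Definition conv_inner f g k := \sum_(i < k) f i.+1 * g (k - i)%N.

Lemma convC f g k : conv f g k = conv g f k.
Proof.
rewrite /conv (reindex_inj rev_ord_inj) /=; apply: eq_bigr => i _.
by rewrite subSS subKn 1?mulrC // -ltnS.
Qed.

Lemma conv_innerC f g k : conv_inner f g k = conv_inner g f k.
Proof.
rewrite /conv_inner (reindex_inj rev_ord_inj) /=; apply: eq_bigr => i _.
by rewrite subnSK // subKn 1?mulrC.
Qed.

Lemma convS f g k :
  conv f g k.+1 = f 0%N * g k.+1 + conv_inner f g k + f k.+1 * g 0%N.
Proof. by rewrite /conv /conv_inner big_ord_recl big_ord_recr /= subn0 subnn addrA. Qed.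

Lemma convSr f g k : conv f g k.+1 = conv f (fun j => g j.+1) k + f k.+1 * g 0%N.
Proof.
rewrite /conv big_ord_recr /= subnn; congr (_ + _); apply: eq_bigr => i _.
by rewrite subSn // -ltnS.
Qed.

Lemma conv_linr f x y z t (a b c : K) k : (forall j, x j = a * y j + b * z j + c * t j) ->
  conv f x k = a * conv f y k + b * conv f z k + c * conv f t k.
Proof.
move=> Hx; rewrite /conv !mulr_sumr -!big_split; apply: eq_bigr => i _.
by rewrite Hx !mulrDr (mulrCA _ a) (mulrCA _ b) (mulrCA _ c).
Qed.

Lemma conv_eq0 f g : f 0%N = 1 -> (forall k, conv f g k = 0) -> forall k, g k = 0.
Proof.
move=> f0 fg0; elim/ltn_ind => k IH.
have := fg0 k; rewrite /conv big_ord_recl /= f0 mul1r subn0 big1 ?addr0 // => i _.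
by rewrite IH ?mulr0 // /bump /= add1n subnSK // leq_subr.
Qed.

End Convolution.

Section QuadraticIdentity.
Variable F : realFieldType.
Variables (r r1 r2 : nat -> F) (v : F).
Hypothesis r0 : r 0%N = 1.

(* Coefficient of z^(k+1) in the derivative at rho = sum_k r k z^k, in the
   direction of the series x, of  z (2 rho rho'' - rho'^2 - 4 v rho^2) - 4 rho^2;
   r1, r2 (resp. x1, x2) stand for the first two derivatives of r (resp. x). *)
Definition quad_polar (x x1 x2 : nat -> F) k :=
  2 * conv x r2 k + 2 * conv r x2 k - 2 * conv r1 x1 k - 8 * v * conv r x k
  - 8 * conv r x k.+1.

Lemma quad_polar_lin (a b c : F) (x x1 x2 y y1 y2 z z1 z2 t t1 t2 : nat -> F) k :
  (forall j, x j = a * y j + b * z j + c * t j) ->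
  (forall j, x1 j = a * y1 j + b * z1 j + c * t1 j) ->
  (forall j, x2 j = a * y2 j + b * z2 j + c * t2 j) ->
  quad_polar x x1 x2 k =
    a * quad_polar y y1 y2 k + b * quad_polar z z1 z2 k + c * quad_polar t t1 t2 k.
Proof.
move=> Hx Hx1 Hx2; rewrite /quad_polar !(convC _ r2) !(conv_linr _ _ Hx)
  (conv_linr _ _ Hx1) (conv_linr _ _ Hx2); ring.
Qed.

Lemma quad_polar_shift (x x1 x2 : nat -> F) k :
  x 0%N = 0 -> x1 0%N = 0 -> x2 0%N = 0 ->
  quad_polar x x1 x2 k.+1 =
    quad_polar (fun j => x j.+1) (fun j => x1 j.+1) (fun j => x2 j.+1) k.
Proof.
move=> x0 x10 x20; rewrite /quad_polar !(convC _ r2).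
by rewrite (convSr r2) (convSr r1) !(convSr r x) (convSr r x2) x0 x10 x20 !mulr0 !addr0.
Qed.

Lemma quad_polar_derivation (d d1 d2 : nat -> F) (dv : F) k : d 0%N = 0 ->
  8 * d k.+1 = 2 * conv d r2 k + 2 * conv r d2 k - conv d1 r1 k - conv r1 d1 k
     - 4 * dv * conv r r k - 4 * v * conv d r k - 4 * v * conv r d k
     - 4 * (conv_inner d r k + conv_inner r d k) ->
  quad_polar d d1 d2 k = 4 * dv * conv r r k.
Proof.
move=> d0; rewrite (convC d1) (convC d r) (conv_innerC d) => d_rec.
rewrite /quad_polar convS r0 d0 mul1r mulr0 addr0; lra.
Qed.

Lemma quad_polar_triangular (z z1 z2 : nat -> F) k :
  (forall j, (j <= k)%N -> [/\ z j = 0, z1 j = 0 & z2 j = 0]) ->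
  quad_polar z z1 z2 k = 0 -> z k.+1 = 0.
Proof.
move=> z_le_k; have conv0 f g : (forall j, (j <= k)%N -> g j = 0) -> conv f g k = 0.
  by move=> g0; rewrite /conv big1 // => i _; rewrite g0 ?mulr0 // leq_subr.
have inner0 : conv_inner r z k = 0.
  by rewrite /conv_inner big1 // => i _; case: (z_le_k _ (leq_subr i k)) => -> _ _; rewrite mulr0.
have [z0 _ _] := z_le_k 0%N (leq0n k).
rewrite /quad_polar convS r0 mul1r inner0 z0 (convC z) !conv0; try by move=> j /z_le_k[].
lra.
Qed.

Lemma quad_polar_lenard (r3 : nat -> F) (v1 : F) : r1 0%N = 0 ->
  (forall k, quad_polar r1 r2 r3 k = 4 * v1 * conv r r k) ->
  forall j, r3 j = 4 * v * r1 j + 2 * v1 * r j + 4 * r1 j.+1.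
Proof.
move=> r10 polar_r1.
pose res j := r3 j - 4 * v * r1 j - 2 * v1 * r j - 4 * r1 j.+1.
suff res0 : forall j, res j = 0 by move=> j; have := res0 j; rewrite /res; lra.
apply: (conv_eq0 r0) => k.
have -> : conv r res k =
    conv r r3 k - 4 * v * conv r r1 k - 2 * v1 * conv r r k - 4 * conv r (fun j => r1 j.+1) k.
  by rewrite /conv !mulr_sumr -!sumrN -!big_split; apply: eq_bigr => i _ /=; rewrite /res; ring.
move: (polar_r1 k); rewrite /quad_polar convSr r10 mulr0 addr0; lra.
Qed.

Lemma quad_polar_wronskian (r3 : nat -> F) (v1 w w1 w2 w3 : F) k : r1 0%N = 0 ->
  (forall j, r3 j = 4 * v * r1 j + 2 * v1 * r j + 4 * r1 j.+1) ->
  quad_polar (fun j => 2 * w1 * r j - 2 * w * r1 j)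
             (fun j => 2 * w2 * r j - 2 * w * r2 j)
             (fun j => 2 * (w3 * r j + w2 * r1 j - w1 * r2 j - w * r3 j)) k
  = 4 * (w3 - 4 * v * w1 - 2 * v1 * w) * conv r r k - 16 * w1 * conv r r k.+1.
Proof.
move=> r10 lenard.
set x := fun j => 2 * w1 * r j - 2 * w * r1 j.
set x1 := fun j => 2 * w2 * r j - 2 * w * r2 j.
have x_lin j : x j = 2 * w1 * r j + (- 2 * w) * r1 j + 0 * r2 j by rewrite /x; ring.
have x1_lin j : x1 j = 2 * w2 * r j + (- 2 * w) * r2 j + 0 * r2 j by rewrite /x1; ring.
rewrite /quad_polar !(convC _ r2) !(conv_linr _ _ x_lin) (conv_linr _ _ x1_lin).
have -> : conv r (fun j => 2 * (w3 * r j + w2 * r1 j - w1 * r2 j - w * r3 j)) k =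
    2 * w3 * conv r r k + 2 * w2 * conv r r1 k - 2 * w1 * conv r r2 k
    - 8 * w * v * conv r r1 k - 4 * w * v1 * conv r r k - 8 * w * conv r (fun j => r1 j.+1) k.
  rewrite /conv !mulr_sumr -!sumrN -!big_split; apply: eq_bigr => i _ /=; rewrite lenard; ring.
rewrite (convSr r r1) r10 mulr0 addr0 (convC r2 r) (convC r1 r) (convC r2 r1); ring.
Qed.

End QuadraticIdentity.

Definition jet := nat -> nat -> nat -> rat.

Definition eqv (p q : dpoly) := forall s : jet, eval s p = eval s q.

Lemma iter_Dx_Add n p q : iter n Dx (Add p q) = Add (iter n Dx p) (iter n Dx q).
Proof. by elim: n => //= n ->. Qed.

Lemma iter_Dx_Neg n p : iter n Dx (Neg p) = Neg (iter n Dx p).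
Proof. by elim: n => //= n ->. Qed.

Lemma iter_Dx_U n a b c : iter n Dx (U a b c) = U (n + a) b c.
Proof. by elim: n => //= n ->. Qed.

Lemma iter_Dx_Cst0 n : iter n Dx (Cst 0) = Cst 0.
Proof. by elim: n => //= n ->. Qed.

Lemma CBS_ideal_eqv p q : eqv p q -> in_CBS_ideal p -> in_CBS_ideal q.
Proof. by move=> pq [r Hr]; exists r => s; rewrite -pq. Qed.

Lemma CBS_ideal0 p : eqv p (Cst 0) -> in_CBS_ideal p.
Proof. by move=> p0; exists [::] => s; rewrite big_nil p0. Qed.

Lemma CBS_idealD p q : in_CBS_ideal p -> in_CBS_ideal q -> in_CBS_ideal (Add p q).
Proof. by move=> [r1 H1] [r2 H2]; exists (r1 ++ r2) => s /=; rewrite big_cat H1 H2. Qed.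

Lemma CBS_idealMl q p : in_CBS_ideal p -> in_CBS_ideal (Mul q p).
Proof.
move=> [r H]; exists [seq (z.1, Mul q z.2) | z <- r] => s /=.
by rewrite big_map H mulr_sumr; apply: eq_bigr => z _ /=; rewrite mulrA.
Qed.

Lemma CBS_idealN p : in_CBS_ideal p -> in_CBS_ideal (Neg p).
Proof. by move/(CBS_idealMl (Cst (-1))); apply: CBS_ideal_eqv => s /=; rewrite mulN1r. Qed.

Lemma CBS_ideal_Dx_CBS a : in_CBS_ideal (iter a Dx CBS).
Proof. by exists [:: (a, 0, 0, Cst 1)]%N => s; rewrite big_seq1 /= mul1r. Qed.

Fixpoint eval_line (s d : jet) (p : dpoly) : {poly rat} :=
  match p with
  | U a b c => (s a b c)%:P + (d a b c)%:P * 'X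
  | Cst q => q%:P
  | Add p q => eval_line s d p + eval_line s d q
  | Mul p q => eval_line s d p * eval_line s d q
  | Neg p => - eval_line s d p
  end.

Lemma horner_eval_line s d p e :
  (eval_line s d p).[e] = eval (fun a b c => s a b c + d a b c * e) p.
Proof. by elim: p => [a b c|q|p IHp q IHq|p IHp q IHq|p IHp] /=; rewrite ?hornerE ?IHp ?IHq. Qed.

Lemma coef_eval_line s sh p :
  let P := eval_line s (fun a b c => eval s (sh a b c)) p in
  P`_0 = eval s p /\ P`_1 = eval s (Dtot sh p).
Proof.
elim: p => [a b c|q|p [p0 p1] q [q0 q1]|p [p0 p1] q [q0 q1]|p [p0 p1]] /=.
- by rewrite !coefD !coefC !coefCM !coefX /= mulr0 mulr1 addr0 add0r.
- by rewrite !coefC.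
- by rewrite !coefD p0 p1 q0 q1.
- rewrite coef0M p0 q0 coefM big_ord_recr big_ord_recr big_ord0 /= add0r.
  by rewrite p0 p1 q0 q1 addrC.
- by rewrite !coefN p0 p1.
Qed.

Lemma poly_eq0_of_horner0 (R : numDomainType) (P : {poly R}) :
  (forall x, P.[x] = 0) -> P = 0.
Proof.
move=> P0; apply: (@roots_geq_poly_eq0 _ _ [seq i%:R | i <- iota 0 (size P)]).
- by apply/allP => x /mapP [i _ ->]; apply/rootP.
- by rewrite map_inj_uniq ?iota_uniq // => i j /eqP; rewrite eqr_nat => /eqP.
- by rewrite size_map size_iota.
Qed.

(* A differential polynomial that vanishes identically stays so along every
   line s + e d of jets, hence so does its derivative in e at e = 0. *)
Lemma Dtot_eqv0 sh p : eqv p (Cst 0) -> eqv (Dtot sh p) (Cst 0).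
Proof.
move=> p0 s; have [_ <-] := coef_eval_line s sh p.
have -> : eval_line s (fun a b c => eval s (sh a b c)) p = 0.
  by apply: poly_eq0_of_horner0 => e; rewrite horner_eval_line p0.
by rewrite coef0.
Qed.

Lemma Dtot_eqv sh p q : eqv p q -> eqv (Dtot sh p) (Dtot sh q).
Proof.
move=> pq s; apply/eqP; rewrite -subr_eq0; apply/eqP.
by apply: (@Dtot_eqv0 sh (Sub p q)) => s' /=; rewrite pq subrr.
Qed.

Lemma iter_Dx_eqv0 n p : eqv p (Cst 0) -> eqv (iter n Dx p) (Cst 0).
Proof. by move=> p0; elim: n => //= n; apply: Dtot_eqv0. Qed.

Fixpoint ux_poly (p : dpoly) : bool :=
  match p with
  | U a _ _ => (0 < a)%N
  | Cst _ => true
  | Add p q | Mul p q => ux_poly p && ux_poly q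
  | Neg p => ux_poly p
  end.

Lemma ux_poly_Dx p : ux_poly p -> ux_poly (Dx p).
Proof.
elim: p => [a b c|q|p IHp q IHq|p IHp q IHq|p IHp] //=.
- by case/andP => /IHp -> /IHq ->.
- by case/andP => pu qu; rewrite pu qu IHp // IHq.
Qed.

(* Only required for a > 0: [shift_t_CBS] below sends u_x to the right-hand
   side of the equation, but u to u_t, whose x-derivative u_tx is a different
   jet coordinate. *)
Definition commutes_with_Dx (sh : nat -> nat -> nat -> dpoly) :=
  forall a b c, (0 < a)%N -> eqv (Dx (sh a b c)) (sh a.+1 b c).

Lemma Dtot_Dx sh p : commutes_with_Dx sh -> ux_poly p ->
  eqv (Dtot sh (Dx p)) (Dx (Dtot sh p)).
Proof.
move=> shC; elim: p => [a b c|q|p IHp q IHq|p IHp q IHq|p IHp] /= pu s //.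
- by rewrite shC.
- by case/andP: pu => /IHp Hp /IHq Hq; rewrite /= Hp Hq.
- by case/andP: pu => /IHp Hp /IHq Hq; rewrite /= Hp Hq; ring.
- by rewrite /= IHp.
Qed.

Definition shift_x a b c := U a.+1 b c.
Definition shift_y a b c := U a b.+1 c.

Lemma shift_x_commutes : commutes_with_Dx shift_x. Proof. by []. Qed.
Lemma shift_y_commutes : commutes_with_Dx shift_y. Proof. by []. Qed.

Definition utx_CBS : dpoly :=
  Sub (Add (Mul (rc 2) (Mul (U 0 1 0) (U 2 0 0))) (Mul (rc 4) (Mul (U 1 0 0) (U 1 1 0))))
      (U 3 1 0).

Definition shift_t_CBS (a b c : nat) : dpoly :=
  match a, b, c with
  | a'.+1, 0, 0 => iter a' Dx utx_CBS
  | _, _, _ => U a b c.+1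
  end.

Definition Dt_CBS := Dtot shift_t_CBS.

Lemma shift_t_CBS_commutes : commutes_with_Dx shift_t_CBS.
Proof. by case=> // a b c _; case: b => [|b]; case: c. Qed.

Lemma Dt_sub_Dt_CBS p : in_CBS_ideal (Sub (Dt p) (Dt_CBS p)).
Proof.
elim: p => [a b c|q|p IHp q IHq|p IHp q IHq|p IHp].
- case: a b c => [|a] [|b] [|c]; try by apply: CBS_ideal0 => s /=; rewrite subrr.
  apply: CBS_ideal_eqv (CBS_ideal_Dx_CBS a) => s.
  rewrite /CBS /Dt_CBS /utx_CBS /Defs.Sub /=.
  by rewrite !iter_Dx_Add !iter_Dx_Neg !iter_Dx_U /= addn1; ring.
- by apply: CBS_ideal0 => s /=; rewrite subrr.
- by apply: CBS_ideal_eqv (CBS_idealD IHp IHq) => s /=; ring.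
- by apply: CBS_ideal_eqv (CBS_idealD (CBS_idealMl q IHp) (CBS_idealMl p IHq)) => s /=; ring.
- by apply: CBS_ideal_eqv (CBS_idealN IHp) => s /=; ring.
Qed.

Lemma eval_big s (I : Type) (t : seq I) (P : pred I) (F : I -> dpoly) :
  eval s (\big[Add/Cst 0]_(i <- t | P i) F i) = \sum_(i <- t | P i) eval s (F i).
Proof. exact: (big_morph (eval s)). Qed.

Lemma Dtot_big sh (I : Type) (t : seq I) (P : pred I) (F : I -> dpoly) :
  Dtot sh (\big[Add/Cst 0]_(i <- t | P i) F i) = \big[Add/Cst 0]_(i <- t | P i) Dtot sh (F i).
Proof. exact: (big_morph (Dtot sh)). Qed.

Section QuadRhs.
Variable r : nat -> dpoly.

Definition quad_term k i : dpoly :=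
  Sub (Sub (Mul (Cst 2) (Mul (r i) (Dx (Dx (r (k - i)%N)))))
           (Mul (Dx (r i)) (Dx (r (k - i)%N))))
      (Mul (Cst 4) (Mul (U 1 0 0) (Mul (r i) (r (k - i)%N)))).

Definition quad_rhs k : dpoly :=
  Sub (\big[Add/Cst 0]_(i < k.+1) quad_term k i)
      (Mul (Cst 4) (\big[Add/Cst 0]_(i < k) Mul (r i.+1) (r (k - i)%N))).

End QuadRhs.

Lemma quad_rhs_ext f g k :
  (forall i, (i <= k)%N -> f i = g i) -> quad_rhs f k = quad_rhs g k.
Proof.
move=> fg; rewrite /quad_rhs; congr (Defs.Sub _ (Mul _ _)); apply: eq_bigr => i _.
- by rewrite /quad_term !fg ?leq_subr // -ltnS.
- by rewrite !fg ?leq_subr.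
Qed.

(* [resolvents n] tabulates R_0, ..., R_n, which makes the strong recursion structural. *)
Fixpoint resolvents n : nat -> dpoly :=
  match n with
  | 0 => fun=> Cst 1
  | n.+1 => fun i =>
      if (i <= n)%N then resolvents n i else Mul (Cst (1 / 8)) (quad_rhs (resolvents n) n)
  end.

Definition resolvent n := resolvents n n.

Lemma resolvents_le n i : (i <= n)%N -> resolvents n i = resolvent i.
Proof.
elim: n i => [|n IH] i; first by rewrite leqn0 => /eqP ->.
by rewrite leq_eqVlt ltnS => /orP[/eqP -> // | le_in] /=; rewrite le_in IH.
Qed.

Lemma resolvent0 : resolvent 0 = Cst 1.
Proof. by []. Qed.

Lemma resolventS k : resolvent k.+1 = Mul (Cst (1 / 8)) (quad_rhs resolvent k).
Proof.
rewrite /resolvent /= ltnn; congr Mul; apply: quad_rhs_ext => i; exact: resolvents_le.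
Qed.

Lemma resolvent1 : eqv (resolvent 1) (Mul (Cst (- 1 / 2)) (U 1 0 0)).
Proof.
move=> s; rewrite resolventS /quad_rhs /Defs.Sub /= !eval_big big_ord1 big_ord0 /=.
by rewrite /quad_term /Defs.Sub /=; field.
Qed.

Lemma ux_poly_resolvent n : ux_poly (resolvent n).
Proof.
elim/ltn_ind: n => -[|k] IH //.
have uR i : (i <= k)%N -> ux_poly (resolvent i) by move=> ?; apply: IH.
rewrite resolventS /=; apply/andP; split; apply: (big_ind ux_poly) => //= [p q -> -> //|i _].
- by rewrite /quad_term /Defs.Sub /= !ux_poly_Dx ?uR ?leq_subr // -ltnS.
- by rewrite !uR ?leq_subr.
Qed.

Opaque resolvent.

Lemma ux_poly_iter_Dx n p : ux_poly p -> ux_poly (iter n Dx p).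
Proof. by move=> pu; elim: n => //= n; apply: ux_poly_Dx. Qed.

Lemma Dtot_iter_Dx sh n p : commutes_with_Dx sh -> ux_poly p ->
  eqv (Dtot sh (iter n Dx p)) (iter n Dx (Dtot sh p)).
Proof.
move=> shC pu; elim: n => // n IH s /=.
by rewrite (Dtot_Dx shC (ux_poly_iter_Dx n pu)); apply: (@Dtot_eqv shift_x).
Qed.

Definition res_at (s : jet) n i := eval s (iter n Dx (resolvent i)).
Definition dres_at sh (s : jet) n i := eval s (iter n Dx (Dtot sh (resolvent i))).

Lemma res_at00 s : res_at s 0 0 = 1.
Proof. by []. Qed.

Lemma res_atS0 s n : res_at s n.+1 0 = 0.
Proof. by rewrite /res_at iterSr iter_Dx_Cst0. Qed.

Lemma dres_at0 sh s n : dres_at sh s n 0 = 0.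
Proof. by rewrite /dres_at iter_Dx_Cst0. Qed.

Lemma quad_polar_dres_at sh s k : commutes_with_Dx sh ->
  quad_polar (res_at s 0) (res_at s 1) (res_at s 2) (s 1 0 0)
             (dres_at sh s 0) (dres_at sh s 1) (dres_at sh s 2) k
  = 4 * eval s (sh 1 0 0)%N * conv (res_at s 0) (res_at s 0) k.
Proof.
move=> shC; apply: quad_polar_derivation; [exact: res_at00 | exact: dres_at0 |].
have DR n i : eval s (Dtot sh (iter n Dx (resolvent i))) = dres_at sh s n i.
  exact: Dtot_iter_Dx shC (ux_poly_resolvent i) s.
have quad_terms : \sum_(i < k.+1) eval s (Dtot sh (quad_term resolvent k i)) =
    2 * conv (dres_at sh s 0) (res_at s 2) k + 2 * conv (res_at s 0) (dres_at sh s 2) k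
    - conv (dres_at sh s 1) (res_at s 1) k - conv (res_at s 1) (dres_at sh s 1) k
    - 4 * eval s (sh 1 0 0)%N * conv (res_at s 0) (res_at s 0) k
    - 4 * s 1 0 0 * conv (dres_at sh s 0) (res_at s 0) k
    - 4 * s 1 0 0 * conv (res_at s 0) (dres_at sh s 0) k.
  rewrite /conv !mulr_sumr -!sumrN -!big_split; apply: eq_bigr => i _ /=.
  move: (DR 1%N i) (DR 1%N (k - i)%N) (DR 2%N (k - i)%N).
  by rewrite /dres_at /res_at /= => -> -> ->; ring.
have inner_terms : \sum_(i < k) eval s (Dtot sh (Mul (resolvent i.+1) (resolvent (k - i)%N))) =
    conv_inner (dres_at sh s 0) (res_at s 0) k + conv_inner (res_at s 0) (dres_at sh s 0) k.
  by rewrite /conv_inner -big_split; apply: eq_bigr => i _.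
rewrite /dres_at /= resolventS /quad_rhs /Defs.Sub /= !Dtot_big !eval_big quad_terms inner_terms.
by rewrite mul0r add0r; field.
Qed.

Lemma lenard_recursion s j :
  res_at s 3 j = 4 * s 1 0 0 * res_at s 1 j + 2 * s 2 0 0 * res_at s 0 j + 4 * res_at s 1 j.+1.
Proof.
apply: (quad_polar_lenard (res_at00 s)) => [|k]; first exact: res_atS0.
exact: quad_polar_dres_at k shift_x_commutes.
Qed.

Definition flow_defect j : dpoly :=
  Add (Mul (Cst 4) (Dy (resolvent j.+1)))
      (Add (Dt_CBS (resolvent j))
           (Sub (Mul (Cst 2) (Mul (U 1 1 0) (resolvent j)))
                (Mul (Cst 2) (Mul (U 0 1 0) (Dx (resolvent j)))))).

Definition flow_at s n j := eval s (iter n Dx (flow_defect j)).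

Lemma quad_polar_flow_at s k :
  quad_polar (res_at s 0) (res_at s 1) (res_at s 2) (s 1 0 0)
             (flow_at s 0) (flow_at s 1) (flow_at s 2) k = 0.
Proof.
pose e0 j := 2 * s 1 1 0 * res_at s 0 j - 2 * s 0 1 0 * res_at s 1 j.
pose e1 j := 2 * s 2 1 0 * res_at s 0 j - 2 * s 0 1 0 * res_at s 2 j.
pose e2 j := 2 * (s 3 1 0 * res_at s 0 j + s 2 1 0 * res_at s 1 j
                  - s 1 1 0 * res_at s 2 j - s 0 1 0 * res_at s 3 j).
have lin0 j : flow_at s 0 j =
    4 * dres_at shift_y s 0 j.+1 + 1 * dres_at shift_t_CBS s 0 j + 1 * e0 j.
  by rewrite /e0 /flow_at /dres_at /res_at /Dy /shift_y /Dt_CBS /=; ring.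
have lin1 j : flow_at s 1 j =
    4 * dres_at shift_y s 1 j.+1 + 1 * dres_at shift_t_CBS s 1 j + 1 * e1 j.
  by rewrite /e1 /flow_at /dres_at /res_at /Dy /shift_y /Dt_CBS /=; ring.
have lin2 j : flow_at s 2 j =
    4 * dres_at shift_y s 2 j.+1 + 1 * dres_at shift_t_CBS s 2 j + 1 * e2 j.
  by rewrite /e2 /flow_at /dres_at /res_at /Dy /shift_y /Dt_CBS /=; ring.
rewrite (quad_polar_lin _ _ _ _ _ lin0 lin1 lin2) -quad_polar_shift ?dres_at0 //.
rewrite quad_polar_dres_at; last exact: shift_y_commutes.
rewrite quad_polar_dres_at; last exact: shift_t_CBS_commutes.
rewrite (quad_polar_wronskian _ _ _ _ _ _ (res_atS0 s 0) (lenard_recursion s)).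
rewrite /=; ring.
Qed.

Lemma flow_defect_eq0 j : eqv (flow_defect j) (Cst 0).
Proof.
elim/ltn_ind: j => -[_ s | k IH s].
  by rewrite /= resolvent0 (@Dtot_eqv shift_y _ _ resolvent1) /=; field.
change (flow_at s 0 k.+1 = 0).
apply: (quad_polar_triangular (res_at00 s) (z1 := flow_at s 1) (z2 := flow_at s 2)).
- by move=> m le_mk; split; apply: (iter_Dx_eqv0 _ (IH m le_mk)).
- exact: quad_polar_flow_at.
Qed.

Definition chi_res k := Mul (Cst (- 2 * 4 ^+ k)) (resolvent k.+1).

Lemma chi_res0 : eqv (chi_res 0) (U 1 0 0).
Proof. by move=> s; rewrite /= resolvent1 /=; field. Qed.

Lemma is_R0_image_chi_res k : is_R0_image (chi_res k) (Neg (chi_res k.+1)).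
Proof.
split.
- apply: CBS_ideal0 => s; move: (lenard_recursion s k.+1); rewrite /res_at /= => lenard.
  by rewrite exprS lenard; ring.
- apply: CBS_ideal_eqv (CBS_idealD (CBS_idealN (Dt_sub_Dt_CBS (chi_res k)))
                     (CBS_idealMl (Cst (2 * 4 ^+ k)) (CBS_ideal0 (flow_defect_eq0 k.+1)))) => s.
  by rewrite /= exprS; ring.
Qed.

Lemma is_R0_image_eqv P P' Q Q' :
  eqv P P' -> eqv Q Q' -> is_R0_image P Q -> is_R0_image P' Q'.
Proof.
move=> PP' QQ' [R0x R0y].
have DxP := @Dtot_eqv shift_x _ _ PP'.
have DxxxP := @Dtot_eqv shift_x _ _ (@Dtot_eqv shift_x _ _ DxP).
split.
- apply: CBS_ideal_eqv R0x => s /=.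
  by rewrite PP' DxP DxxxP (@Dtot_eqv shift_x _ _ QQ').
- apply: CBS_ideal_eqv R0y => s /=.
  by rewrite PP' DxP (@Dtot_eqv shift_y _ _ QQ') (@Dtot_eqv (fun a b c => U a b c.+1) _ _ PP').
Qed.

Theorem proposition2 :
  exists chi : nat -> dpoly,
    chi 0%N = U 1 0 0 /\
    forall k : nat, is_R0_image (chi k) (Neg (chi k.+1)).
Proof.
exists (fun k => if k is 0 then U 1 0 0 else chi_res k); split=> // k.
apply: is_R0_image_eqv (is_R0_image_chi_res k) => //.
by case: k => // s; exact: chi_res0.
Qed.
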